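(* Let $X$ be a finite set with at least two elements. If a transition function $t$ has a persistent craving representation, then for every $x\in X$, $\nu_X\ne\nu_{X\setminus\{x\}}$.
   Context: $\mathcal{L}(X)$ is the set of linear orders on $X$, $M(\succ,A)$ the $\succ$-maximal element of $A$. Given a linear order $\rhd$, the craving preferences $\{\succ_x\}_{x\in X}$ are: $x\succ_x y$ for all $y\ne x$, and for $y,z\ne x$, $y\succ_x z$ iff $y\rhd z$. A distribution $\nu$ supported on $\{\succ_x\}$ is craving monotonic w.r.t. $\rhd$ if $x\rhd y$ implies $\nu(\succ_x)>\nu(\succ_y)>0$. A persistence function is $\phi:X^2\to[0,1)$ with $\phi(x,x)=0$, $\phi(x,y)>0$ for $x\ne y$. A transition function $t:X\times\mathcal{L}(X)\to\Delta(\mathcal{L}(X))$ has a persistent craving representation if for some $\rhd$, craving monotonic $\nu$ and persistence function $\phi$: $t(x,\succ_y)=\phi(x,y)\delta_{\succ_y}+(1-\phi(x,y))\nu$ for all $x,y$ and $t(x,\succ)=\nu$ for $\succ$ outside the support of $\nu$. For nonempty $A\subseteq X$, $\nu_A$ is the unique stationary distribution of the Markov chain on $\mathcal{L}(X)$ with $m_A(\succ,\succ')=t_{\succ'}(M(\succ,A),\succ)$. *)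

From HB Require Import structures.
From mathcomp Require Import all_boot all_order all_algebra.
From mathcomp Require Import reals.
Set Implicit Arguments. Unset Strict Implicit. Unset Printing Implicit Defensive.
Import Order.TTheory GRing.Theory Num.Theory.
Local Open Scope ring_scope.

Section Defs.
Variable X : finType.

(* A (strict) linear order on X, encoded as a boolean relation r x y = "x ≻ y". *)
Definition is_lin_order (r : {ffun X -> {ffun X -> bool}}) : bool :=
  [&& [forall x, ~~ r x x],
      [forall x, forall y, forall z, r x y ==> r y z ==> r x z] &
      [forall x, forall y, (x != y) ==> (r x y || r y x)]].

Definition linord := {r : {ffun X -> {ffun X -> bool}} | is_lin_order r}.

Definition lo (r : linord) (x y : X) : bool := (val r) x y.

Definition maxel (r : linord) (A : {set X}) : option X :=
  [pick m in A | [forall y in A, (y != m) ==> lo r m y]].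

Variable R : realType.

Definition is_distr (T : finType) (mu : {ffun T -> R}) : Prop :=
  (forall a, 0 <= mu a) /\ \sum_a mu a = 1.

Definition is_craving (lhd : linord) (x : X) (r : linord) : bool :=
  [forall y, (y != x) ==> lo r x y] &&
  [forall y, forall z, (y != x) ==> (z != x) ==> (lo r y z == lo lhd y z)].

Definition craving_monotonic (lhd : linord) (c : X -> linord)
    (nu : {ffun linord -> R}) : Prop :=
  is_distr nu /\
  (forall r, nu r != 0 -> exists x, r = c x) /\
  (forall x y, lo lhd x y -> nu (c x) > nu (c y) /\ nu (c y) > 0).

Definition persistence (phi : X -> X -> R) : Prop :=
  (forall x y, 0 <= phi x y /\ phi x y < 1) /\
  (forall x, phi x x = 0) /\
  (forall x y, x != y -> phi x y > 0).

Definition persistent_craving_rep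
    (t : X -> linord -> {ffun linord -> R}) : Prop :=
  exists (lhd : linord) (c : X -> linord) (nu : {ffun linord -> R})
         (phi : X -> X -> R),
    (forall x, is_craving lhd x (c x)) /\
    craving_monotonic lhd c nu /\
    persistence phi /\
    (forall x y r', t x (c y) r' =
        phi x y * (r' == c y)%:R + (1 - phi x y) * nu r') /\
    (forall x r, nu r = 0 -> t x r = nu).

Definition mA (t : X -> linord -> {ffun linord -> R}) (A : {set X})
    (r r' : linord) : R :=
  if maxel r A is Some m then t m r r' else 0.

Definition stationary (t : X -> linord -> {ffun linord -> R}) (A : {set X})
    (mu : {ffun linord -> R}) : Prop :=
  is_distr mu /\ forall r', mu r' = \sum_r mu r * mA t A r r'.

End Defs.

(* At a craving preference [c y], with [y] in the menu [A], the chosen item is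
   [y] itself and [phi y y = 0], so the chain restarts from [nu]; off the support
   of [nu] it restarts from [nu] as well.  Hence the stationary distribution on
   the full menu is [nu].  On [X :\ x], the row of [c x] chooses some [m != x]
   and keeps [c x] with extra probability [phi m x * (1 - nu (c x)) > 0], while
   every other row restarts from [nu]; so the mass that [nu] puts on [c x] is
   not preserved and [nu] is not stationary there. *)
From HB Require Import structures.
From mathcomp Require Import all_boot all_order all_algebra.
From mathcomp Require Import reals.
From mathcomp Require Import lra.
Import Order.TTheory GRing.Theory Num.Theory.
Local Open Scope ring_scope.
Set Implicit Arguments. Unset Strict Implicit.

Section LinearOrders.
Variable X : finType.

Lemma lo_asym (r : linord X) a b : lo r a b -> lo r b a -> False.
Proof.
move: (valP r) => /and3P [/forallP irr /forallP trans _]; rewrite /lo => hab hba.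
have := implyP (implyP (forallP (forallP (trans a) b) a) hab) hba.
by rewrite (negbTE (irr a)).
Qed.

Lemma lo_total (r : linord X) a b : a != b -> lo r a b || lo r b a.
Proof.
move: (valP r) => /and3P [_ _ /forallP total].
exact: implyP (forallP (total a) b).
Qed.

Lemma maxel_in (r : linord X) (A : {set X}) m : maxel r A = Some m -> m \in A.
Proof. by rewrite /maxel; case: pickP => // m' /andP [m'A _] [<-]. Qed.

Variable lhd : linord X.

Lemma craving_top x (r : linord X) y : is_craving lhd x r -> y != x -> lo r x y.
Proof. by move=> /andP [/forallP top _] /(implyP (top y)). Qed.

Lemma craving_inj x y (r r' : linord X) :
  is_craving lhd x r -> is_craving lhd y r' -> r = r' -> x = y.
Proof.
move=> hx hy def_r; rewrite -def_r in hy; apply/eqP/negP => /negP nxy.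
by apply: (lo_asym (craving_top hx _) (craving_top hy nxy)); rewrite eq_sym.
Qed.

Lemma maxel_craving x (r : linord X) (A : {set X}) :
  is_craving lhd x r -> x \in A -> maxel r A = Some x.
Proof.
move=> hx xA; rewrite /maxel; case: pickP => [m /andP [_ /forall_inP m_max] | no_max].
- congr Some; apply/eqP/negP => /negP mx.
  apply: (lo_asym (implyP (m_max x xA) _) (craving_top hx mx)).
  by rewrite eq_sym.
- move: (no_max x); rewrite xA /= => /negP; case.
  by apply/forall_inP => y _; apply/implyP => /(craving_top hx).
Qed.

End LinearOrders.

Section PersistentCraving.
Variables (R : realType) (X : finType) (t : X -> linord X -> {ffun linord X -> R}).
Variables (lhd : linord X) (c : X -> linord X) (nu : {ffun linord X -> R}).
Variable phi : X -> X -> R.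
Hypothesis c_craving : forall x, is_craving lhd x (c x).
Hypothesis nu_monotonic : craving_monotonic lhd c nu.
Hypothesis phi_persistence : persistence phi.
Hypothesis t_craving : forall x y r',
  t x (c y) r' = phi x y * (r' == c y)%:R + (1 - phi x y) * nu r'.
Hypothesis t_off_support : forall x r, nu r = 0 -> t x r = nu.

Let nu_distr : is_distr nu := nu_monotonic.1.
Let nu_support r : nu r != 0 -> exists x, r = c x := nu_monotonic.2.1 r.

Lemma t_craving_self x : t x (c x) = nu.
Proof.
apply/ffunP => r'.
by rewrite t_craving phi_persistence.2.1 mul0r subr0 mul1r add0r.
Qed.

Lemma mA_restart (A : {set X}) r r' :
  (forall y, r = c y -> y \in A) -> mA t A r r' = (maxel r A != None)%:R * nu r'.
Proof.
move=> cA; rewrite /mA; case def_m: maxel => [m|]; last by rewrite mul0r.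
rewrite mul1r; have [nu_r0|/nu_support [y def_r]] := eqVneq (nu r) 0.
  by rewrite t_off_support.
move: def_m; rewrite def_r (maxel_craving (c_craving y) (cA y def_r)) => -[<-].
by rewrite t_craving_self.
Qed.

Lemma stationary_setT mu : stationary t [set: X] mu -> mu = nu.
Proof.
move=> [[_ mu1] mu_stat].
pose s := \sum_r mu r * (maxel r [set: X] != None)%:R.
have mu_s r' : mu r' = s * nu r'.
  rewrite mu_stat big_distrl; apply: eq_bigr => r _.
  by rewrite (@mA_restart [set: X]) ?mulrA // => y _; rewrite in_setT.
have s1 : s = 1.
  rewrite -mu1 -[s]mulr1 -nu_distr.2 big_distrr.
  by apply: eq_bigr => r _; rewrite mu_s.
by apply/ffunP => r'; rewrite mu_s s1 mul1r.
Qed.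

Lemma nu_craving_gt0 x y : x != y -> 0 < nu (c x).
Proof.
move=> xy; case/orP: (lo_total lhd xy) => /(nu_monotonic.2.2) [lt_yx gt0] //.
exact: lt_trans gt0 lt_yx.
Qed.

Lemma nu_craving_lt1 x y : x != y -> nu (c x) < 1.
Proof.
move=> xy; have cxy : c y != c x.
  by apply: contraNneq xy => /(craving_inj (c_craving y) (c_craving x)) ->.
rewrite -nu_distr.2 (bigD1 (c x)) //= (bigD1 (c y)) //= ltrDl.
apply: (@lt_le_trans _ _ (nu (c y))); first by rewrite (@nu_craving_gt0 y x) // eq_sym.
by rewrite lerDl sumr_ge0 // => r _; apply: nu_distr.1.
Qed.

Lemma mA_craving_self_neq (A : {set X}) x :
  x \notin A -> 0 < nu (c x) < 1 -> mA t A (c x) (c x) != nu (c x).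
Proof.
move=> xA /andP [nu_gt0 nu_lt1]; rewrite /mA.
case def_m: maxel => [m|]; last by rewrite eq_sym lt0r_neq0.
rewrite t_craving eqxx mulr1.
have mx : m != x by apply: contraNneq xA => <-; apply: maxel_in def_m.
have [[phi_ge0 phi_lt1] phi_gt0] := (phi_persistence.1 m x, phi_persistence.2.2 m x mx).
have gap : 0 < phi m x * (1 - nu (c x)) by rewrite mulr_gt0 // subr_gt0.
by rewrite gt_eqF //; nra.
Qed.

Lemma nu_not_stationary_setD1 x y : x != y -> ~ stationary t ([set: X] :\ x) nu.
Proof.
move=> xy [_ nu_stat].
have nu_gt0 := nu_craving_gt0 xy; have nu_lt1 := nu_craving_lt1 xy.
have others : \sum_(r | r != c x) nu r * mA t ([set: X] :\ x) r (c x)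
    = (1 - nu (c x)) * nu (c x).
  have -> : 1 - nu (c x) = \sum_(r | r != c x) nu r.
    by rewrite -nu_distr.2 (bigD1 (c x)) //= addrC addrK.
  rewrite big_distrl /=; apply: eq_bigr => r r_cx.
  have [->|/nu_support [z def_r]] := eqVneq (nu r) 0; first by rewrite !mul0r.
  have cA w : r = c w -> w \in [set: X] :\ x.
    by move=> def_rw; rewrite !inE andbT; apply: contraNneq r_cx => wx; rewrite def_rw wx.
  by rewrite mA_restart // def_r (maxel_craving (c_craving z) (cA z def_r)) mul1r.
have := @mA_craving_self_neq ([set: X] :\ x) x.
rewrite !inE eqxx nu_gt0 nu_lt1 /= => /(_ isT isT) /eqP self_neq.
have := nu_stat (c x); rewrite (bigD1 (c x)) //= others => stat_cx.
apply: self_neq.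
apply: (mulfI (lt0r_neq0 nu_gt0)); lra.
Qed.

End PersistentCraving.

Lemma exists_neq (X : finType) (x : X) : (1 < #|X|)%N -> exists y, x != y.
Proof.
move=> hX; have [y yx|all_x] := pickP (predC1 x); first by exists y; rewrite eq_sym.
suff : (#|X| <= 1)%N by rewrite leqNgt hX.
rewrite -(cards1 x) -cardsT subset_leq_card //.
by apply/subsetP => z _; rewrite inE; move: (all_x z) => /= /negbFE.
Qed.

Theorem proposition3 (R : realType) (X : finType) (hX : (1 < #|X|)%N)
  (t : X -> linord X -> {ffun linord X -> R})
  (ht : forall x r, is_distr (t x r))
  (hrep : persistent_craving_rep t) :
  forall (x : X) (nuX nuXx : {ffun linord X -> R}),
    stationary t [set: X] nuX ->
    stationary t ([set: X] :\ x) nuXx ->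
    nuX <> nuXx.
Proof.
move: hrep => [lhd [c [nu [phi [c_craving [nu_mon [phi_pers [t_cr t_off]]]]]]]].
move=> x nuX nuXx statX statXx def_nuXx; subst nuXx.
have [y xy] := exists_neq x hX.
rewrite (stationary_setT c_craving nu_mon phi_pers t_cr t_off statX) in statXx.
exact (nu_not_stationary_setD1 c_craving nu_mon phi_pers t_cr t_off xy statXx).
Qed.
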